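(* Let $(\{0,1\}^{\mathbb N},\mathbb B_\Pi,m,\sigma)$ be an ergodic Markov shift over two symbols, $X$ a lexicographic-like random variable, $d\in\mathbb N$, $O=\bigcup_{n=0}^\infty\sigma^{-n}(\{\overline0\})$ with $\overline0=(0,0,\dots)$, and $\widetilde{\mathcal P}^X(d)=\{P\setminus O\mid P\in\mathcal P^X(d)\}\cup\{O\}$. If $P_i,P_j\in\widetilde{\mathcal P}^X(d)$ and $P_i\subseteq C_{a_0}$ for some $a_0\in\{0,1\}$, then either $P_i\cap\sigma^{-1}(P_j)=C_{a_0}\cap\sigma^{-1}(P_j)$ or $m(P_i\cap\sigma^{-1}(P_j))=0$.
   Context: Markov shift over $\{0,1\}$: given a $2\times2$ stochastic matrix $Q=(q_{ij})$ and a stationary probability vector $p$ with positive entries, the system on one-sided sequences $s=(s_0,s_1,\dots)\in\{0,1\}^{\mathbb N}$ with $\sigma$-algebra $\mathbb B_\Pi$ generated by cylinders $C_{a_0\dots a_{n-1}}=\{s:s_i=a_i,i<n\}$, shift $(\sigma s)_j=s_{j+1}$ and $m(C_{a_0\dots a_{n-1}})=p_{a_0}q_{a_0a_1}\cdots q_{a_{n-2}a_{n-1}}$; ergodic means every $\sigma$-invariant set has measure $0$ or $1$. Lexicographic order: $r\prec s$ iff $r_0<s_0$ or there is $k\in\mathbb N$ with $r_i=s_i$ for $i<k$ and $r_k<s_k$. $X$ is lexicographic-like if it is injective on a set of full $m$-measure and for all $s$ and $j,n\in\mathbb N_0$: $X(\sigma^j s)\le X(\sigma^n s)$ iff $\sigma^j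 s\preceq\sigma^n s$. Ordinal pattern: $(x_0,\dots,x_d)$ has pattern $\pi=(r_0,\dots,r_d)\in\Pi_d$ (permutations of $\{0,\dots,d\}$) if $x_{r_0}\ge\dots\ge x_{r_d}$ and $r_{l-1}>r_l$ whenever $x_{r_{l-1}}=x_{r_l}$. The ordinal partition $\mathcal P^X(d)$ consists of the sets $P_\pi=\{s:(X(\sigma^d s),\dots,X(\sigma s),X(s))\text{ has ordinal pattern }\pi\}$, $\pi\in\Pi_d$. *)

(* classical reals. Symbols 0,1 are encoded as false,true. *)
From Stdlib Require Import Reals List.
Import ListNotations.
Open Scope R_scope.

Definition seqb := nat -> bool.
Definition set := seqb -> Prop.

Definition shift (s : seqb) : seqb := fun k => s (S k).
Definition shiftn (n : nat) (s : seqb) : seqb := fun k => s (n + k)%nat.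

Definition cyl (a : list bool) : set :=
  fun s => forall i, (i < length a)%nat -> s i = nth i a false.

Definition bv (b : bool) : nat := if b then 1%nat else 0%nat.

Definition markov_params (Q : bool -> bool -> R) (p : bool -> R) : Prop :=
  (forall i j, 0 <= Q i j) /\ (forall i, Q i false + Q i true = 1) /\
  (forall i, 0 < p i) /\ p false + p true = 1 /\
  (forall j, p false * Q false j + p true * Q true j = p j).

Fixpoint trans_prod (Q : bool -> bool -> R) (a0 : bool) (l : list bool) : R :=
  match l with
  | [] => 1
  | a1 :: l' => Q a0 a1 * trans_prod Q a1 l'
  end.

Definition mcyl (Q : bool -> bool -> R) (p : bool -> R) (a : list bool) : R :=
  match a with
  | [] => 1
  | a0 :: l => p a0 * trans_prod Q a0 l
  end.

(* m-null sets: outer measure (Caratheodory extension from cylinders) is 0 *)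
Definition null (Q : bool -> bool -> R) (p : bool -> R) (A : set) : Prop :=
  forall eps, 0 < eps ->
    exists c : nat -> list bool,
      (forall s, A s -> exists n, cyl (c n) s) /\
      (forall N, sum_f_R0 (fun n => mcyl Q p (c n)) N <= eps).

Inductive measurable : set -> Prop :=
  | meas_cyl : forall a, measurable (cyl a)
  | meas_compl : forall A, measurable A -> measurable (fun s => ~ A s)
  | meas_union : forall F : nat -> set, (forall n, measurable (F n)) ->
      measurable (fun s => exists n, F n s)
  | meas_ext : forall A B, measurable A -> (forall s, A s <-> B s) -> measurable B.

Definition ergodic (Q : bool -> bool -> R) (p : bool -> R) : Prop :=
  forall A, measurable A -> (forall s, A s <-> A (shift s)) ->
    null Q p A \/ null Q p (fun s => ~ A s).

Definition lex_lt (r s : seqb) : Prop :=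
  exists k, (forall i, (i < k)%nat -> r i = s i) /\ (bv (r k) < bv (s k))%nat.
Definition lex_le (r s : seqb) : Prop := lex_lt r s \/ r = s.

Definition rv_measurable (X : seqb -> R) : Prop :=
  forall c, measurable (fun s => X s <= c).

Definition lexicographic_like (Q : bool -> bool -> R) (p : bool -> R)
    (X : seqb -> R) : Prop :=
  (exists N : set, null Q p N /\
     forall s t, ~ N s -> ~ N t -> X s = X t -> s = t) /\
  (forall s j n, X (shiftn j s) <= X (shiftn n s) <-> lex_le (shiftn j s) (shiftn n s)).

Definition is_perm (d : nat) (r : nat -> nat) : Prop :=
  (forall l, (l <= d)%nat -> (r l <= d)%nat) /\
  (forall l l', (l <= d)%nat -> (l' <= d)%nat -> r l = r l' -> l = l').

Definition has_pattern (d : nat) (x : nat -> R) (r : nat -> nat) : Prop :=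
  forall l, (1 <= l <= d)%nat ->
    x (r (l - 1)%nat) >= x (r l) /\
    (x (r (l - 1)%nat) = x (r l) -> (r (l - 1)%nat > r l)%nat).

(* P_pi: (X(sigma^d s), ..., X(sigma s), X(s)) has pattern r, i.e. x_i = X(sigma^(d-i) s) *)
Definition P_pat (X : seqb -> R) (d : nat) (r : nat -> nat) : set :=
  fun s => has_pattern d (fun i => X (shiftn (d - i) s)) r.

Definition Oset : set := fun s => exists n, forall k, shiftn n s k = false.

Definition in_tilde_partition (X : seqb -> R) (d : nat) (A : set) : Prop :=
  (forall s, A s <-> Oset s) \/
  (exists r, is_perm d r /\ forall s, A s <-> (P_pat X d r s /\ ~ Oset s)).

(* Off the set O, the first symbol of a sequence u is 1 exactly when
   sigma u precedes u lexicographically.  Since X orders the orbit of s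
   lexicographically, the ordinal pattern of (X(sigma^d s), ..., X(s)) is
   therefore determined by s_0 together with the lexicographic comparisons
   among sigma s, ..., sigma^d s, which are already fixed by the cell of
   sigma s.  So inside C_{a0}, whether s lies in P_i depends only on the cell
   of sigma s: the intersection with sigma^-1 P_j is empty or all of
   C_{a0} ∩ sigma^-1 P_j.  The cell O itself is excluded, as it meets both
   cylinders C_0 and C_1. *)
From Stdlib Require Import Reals List Lia Lra Classical FunctionalExtensionality.
From Stdlib Require Import FinFun.
Import ListNotations.
Open Scope R_scope.

Lemma is_perm_surj d r a : is_perm d r -> (a <= d)%nat -> exists l, (l <= d)%nat /\ r l = a.
Proof.
  intros [Hbound Hinj] Ha.
  assert (Hincl : incl (seq 0 (S d)) (map r (seq 0 (S d)))).
  { apply NoDup_length_incl.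
    - apply Injective_map_NoDup_in; [|apply seq_NoDup].
      intros x y Hx Hy E. apply in_seq in Hx; apply in_seq in Hy. apply Hinj; lia.
    - rewrite length_map; lia.
    - intros x Hx. apply in_map_iff in Hx. destruct Hx as [y [<- Hy]].
      apply in_seq in Hy. apply in_seq. specialize (Hbound y). lia. }
  assert (Hin : In a (seq 0 (S d))) by (apply in_seq; lia).
  apply Hincl, in_map_iff in Hin. destruct Hin as [l [E Hl]].
  apply in_seq in Hl. exists l; split; [lia | exact E].
Qed.

Definition ranks_above (x : nat -> R) (a b : nat) : Prop :=
  x a > x b \/ (x a = x b /\ (a > b)%nat).

Lemma ranks_above_trans x a b c :
  ranks_above x a b -> ranks_above x b c -> ranks_above x a c.
Proof.
  unfold ranks_above; intros [H|[H H']] [G|[G G']];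
    try (left; lra); right; split; [lra | lia].
Qed.

Lemma ranks_above_iff_le x a b : (b < a)%nat -> (ranks_above x a b <-> x b <= x a).
Proof.
  unfold ranks_above; intros Hba; split; [intros [H|[H _]]; lra|].
  intros H. destruct (Rle_lt_or_eq_dec _ _ H); [left; lra | right; split; [lra | lia]].
Qed.

Lemma ranks_above_iff_lt x a b : (a < b)%nat -> (ranks_above x a b <-> x b < x a).
Proof. unfold ranks_above; intros Hab; split; [intros [H|[_ H]]; [lra | lia] | intros H; left; lra]. Qed.

Lemma has_pattern_iff d x r :
  has_pattern d x r <->
  forall l, (1 <= l <= d)%nat -> ranks_above x (r (l - 1)%nat) (r l).
Proof.
  unfold has_pattern, ranks_above; split; intros H l Hl; specialize (H l Hl).
  - destruct H as [Hge Heq]. destruct (Rge_gt_or_eq_dec _ _ Hge); auto.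
  - destruct H as [H|[H H']]; split; intros; auto; lra.
Qed.

Lemma has_pattern_ranks_above d x r l l' :
  has_pattern d x r -> (l < l' <= d)%nat -> ranks_above x (r l) (r l').
Proof.
  rewrite has_pattern_iff; intros Hx [Hll' Hl'].
  induction Hll' as [|l' Hll' IH].
  - specialize (Hx (S l) ltac:(lia)). now replace (S l - 1)%nat with l in Hx by lia.
  - apply (ranks_above_trans _ _ (r l')); [apply IH; lia|].
    specialize (Hx (S l') ltac:(lia)). now replace (S l' - 1)%nat with l' in Hx by lia.
Qed.

Definition same_ranks (d : nat) (x y : nat -> R) : Prop :=
  forall a b, (b < a <= d)%nat -> (x b <= x a <-> y b <= y a).

Lemma has_pattern_le d x y r a b :
  is_perm d r -> has_pattern d x r -> has_pattern d y r ->
  (b < a <= d)%nat -> x b <= x a -> y b <= y a.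
Proof.
  intros Hr Hx Hy Hab Hxab.
  destruct (is_perm_surj d r a Hr ltac:(lia)) as [la [Hla <-]].
  destruct (is_perm_surj d r b Hr ltac:(lia)) as [lb [Hlb <-]].
  destruct (Nat.lt_trichotomy la lb) as [Hlt|[<-|Hgt]]; [|lia|].
  - apply ranks_above_iff_le; [lia|]. now apply (has_pattern_ranks_above d).
  - exfalso. assert (Hrk : ranks_above x (r lb) (r la))
      by now apply (has_pattern_ranks_above d).
    rewrite ranks_above_iff_lt in Hrk; lra || lia.
Qed.

Lemma has_pattern_same_ranks d x y r :
  is_perm d r -> has_pattern d x r -> has_pattern d y r -> same_ranks d x y.
Proof.
  intros Hr Hx Hy a b Hab.
  split; [apply (has_pattern_le d x y r) | apply (has_pattern_le d y x r)]; auto.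
Qed.

Lemma same_ranks_has_pattern d x y r :
  is_perm d r -> has_pattern d x r -> same_ranks d x y -> has_pattern d y r.
Proof.
  intros [Hbound Hinj] Hx Hxy. rewrite has_pattern_iff in *. intros l Hl.
  specialize (Hx l Hl).
  set (a := r (l - 1)%nat) in *; set (b := r l) in *.
  assert (Ha : (a <= d)%nat) by (apply Hbound; lia).
  assert (Hb : (b <= d)%nat) by (apply Hbound; lia).
  destruct (Nat.lt_trichotomy a b) as [Hlt|[Heq|Hgt]].
  - rewrite ranks_above_iff_lt in *; auto.
    apply Rnot_le_lt. rewrite <- (Hxy b a); [lra | lia].
  - apply Hinj in Heq; lia.
  - rewrite ranks_above_iff_le in *; auto. apply Hxy; auto.
Qed.

Lemma seqb_eq_cons u v : u = v <-> (u 0%nat = v 0%nat /\ shift u = shift v).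
Proof.
  split; [now intros ->|]. intros [H0 Hs]. extensionality k. destruct k; auto.
  change (shift u k = shift v k). now rewrite Hs.
Qed.

Lemma lex_lt_cons u v :
  lex_lt u v <-> ((bv (u 0%nat) < bv (v 0%nat))%nat \/
                  (u 0%nat = v 0%nat /\ lex_lt (shift u) (shift v))).
Proof.
  split.
  - intros [[|k] [Hpre Hk]]; [now left | right]. split; [apply Hpre; lia|].
    exists k; split; [intros i Hi; apply Hpre; lia | exact Hk].
  - intros [H|[H [k [Hpre Hk]]]].
    + exists 0%nat; split; [intros; lia | exact H].
    + exists (S k); split; [intros [|i] Hi; [| apply Hpre]; auto; lia | exact Hk].
Qed.

Lemma lex_le_cons u v :
  lex_le u v <-> ((bv (u 0%nat) < bv (v 0%nat))%nat \/
                  (u 0%nat = v 0%nat /\ lex_le (shift u) (shift v))).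
Proof. unfold lex_le. rewrite lex_lt_cons, seqb_eq_cons. tauto. Qed.

Lemma lex_lt_not_le u v : lex_lt u v -> ~ lex_le v u.
Proof.
  intros [k [Hpre Hk]] [[k' [Hpre' Hk']] | ->]; [| lia].
  destruct (Nat.lt_trichotomy k k') as [Hlt|[<-|Hgt]].
  - rewrite (Hpre' k Hlt) in Hk; lia.
  - lia.
  - rewrite (Hpre k' Hgt) in Hk'; lia.
Qed.

Lemma exists_first_index (f : nat -> bool) b n :
  f n = b -> exists m, f m = b /\ forall i, (i < m)%nat -> f i = negb b.
Proof.
  revert f; induction n as [|n IH]; intros f Hf.
  - exists 0%nat; split; [exact Hf | intros; lia].
  - destruct (Bool.bool_dec (f 0%nat) b) as [E|E].
    + exists 0%nat; split; [exact E | intros; lia].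
    + destruct (IH (fun i => f (S i)) Hf) as [m [Hm Hpre]].
      exists (S m); split; [exact Hm|]. intros [|i] Hi.
      * destruct b, (f 0%nat); simpl in *; congruence.
      * apply Hpre; lia.
Qed.

(* The comparison of u with its shift is decided at the end of the initial
   run of u_0's; off O this run is finite when u_0 = 0. *)
Lemma shift_lex_le_iff u : ~ Oset u -> (lex_le (shift u) u <-> u 0%nat = true).
Proof.
  intros HuO. destruct (u 0%nat) eqn:Hu0; split; intros H; auto; try discriminate.
  - destruct (classic (exists i, u i = false)) as [[i Hi]|Hall].
    + destruct (exists_first_index u false i Hi) as [[|k] [Hk Hpre]]; [congruence|].
      left. exists k. unfold shift. rewrite Hk, (Hpre k) by lia.
      split; [intros j Hj; rewrite (Hpre j), (Hpre (S j)) by lia; reflexivity | simpl; lia].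
    + right. extensionality k. unfold shift.
      destruct (u (S k)) eqn:E1, (u k) eqn:E2; auto; exfalso; apply Hall; eauto.
  - destruct (classic (exists i, u i = true)) as [[i Hi]|Hall].
    + destruct (exists_first_index u true i Hi) as [[|k] [Hk Hpre]]; [congruence|].
      exfalso. apply (lex_lt_not_le u (shift u)); [|exact H].
      exists k. unfold shift. rewrite Hk, (Hpre k) by lia.
      split; [intros j Hj; rewrite (Hpre j), (Hpre (S j)) by lia; reflexivity | simpl; lia].
    + exfalso. apply HuO. exists 0%nat. intros k.
      destruct (u k) eqn:E; auto. exfalso; apply Hall; eauto.
Qed.

Lemma shift_shiftn n s : shift (shiftn n s) = shiftn (S n) s.
Proof. extensionality k. unfold shift, shiftn. f_equal. lia. Qed.

Lemma Oset_shiftn n s : Oset (shiftn n s) -> Oset s.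
Proof.
  intros [m Hm]. exists (n + m)%nat. intros k. specialize (Hm k).
  unfold shiftn in *. now rewrite <- Nat.add_assoc.
Qed.

Lemma Oset_shift s : Oset (shift s) <-> Oset s.
Proof.
  split; [apply (Oset_shiftn 1)|].
  intros [n Hn]. exists n. intros k. specialize (Hn (S k)).
  unfold shiftn, shift in *. now rewrite Nat.add_succ_r in Hn.
Qed.

Lemma cyl1_head a s : cyl [a] s <-> s 0%nat = a.
Proof.
  split; [intros H; exact (H 0%nat ltac:(simpl; lia))|].
  intros H [|i] Hi; simpl in *; [exact H | lia].
Qed.

Lemma Oset_not_in_cyl1 a : ~ (forall s, Oset s -> cyl [a] s).
Proof.
  intros H.
  assert (H0 : cyl [a] (fun _ => false)) by (apply H; exists 0%nat; reflexivity).
  assert (H1 : cyl [a] (fun k => match k with 0%nat => true | _ => false end))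
    by (apply H; exists 1%nat; reflexivity).
  rewrite cyl1_head in H0, H1. congruence.
Qed.

Lemma orbit_symbol_iff t j :
  ~ Oset t -> (t j = true <-> lex_le (shiftn (S j) t) (shiftn j t)).
Proof.
  intros HtO. rewrite <- shift_shiftn, shift_lex_le_iff.
  - unfold shiftn. now rewrite Nat.add_0_r.
  - intros H. exact (HtO (Oset_shiftn j t H)).
Qed.

Lemma orbit_lex_le_head s j :
  lex_le (shiftn (S j) s) (shiftn 0 s) <->
  ((bv (s (S j)) < bv (s 0%nat))%nat \/
   (s (S j) = s 0%nat /\ lex_le (shiftn (S j) (shift s)) (shiftn 0 (shift s)))).
Proof.
  rewrite lex_le_cons, shift_shiftn.
  replace (shiftn (S j) s 0%nat) with (s (S j)) by (unfold shiftn; f_equal; lia).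
  reflexivity.
Qed.

Definition same_orbit_order (d : nat) (s t : seqb) : Prop :=
  forall i j, (i < j <= d)%nat ->
    (lex_le (shiftn j s) (shiftn i s) <-> lex_le (shiftn j t) (shiftn i t)).

Lemma same_orbit_order_cons d s t :
  s 0%nat = t 0%nat -> ~ Oset (shift s) -> ~ Oset (shift t) ->
  same_orbit_order d (shift s) (shift t) -> same_orbit_order d s t.
Proof.
  intros H0 HsO HtO Hst i [|j] Hij; [lia|].
  destruct i as [|i]; [| exact (Hst i j ltac:(lia))].
  assert (Hsym : s (S j) = t (S j)).
  { apply Bool.eq_iff_eq_true.
    rewrite (orbit_symbol_iff (shift s) j HsO), (orbit_symbol_iff (shift t) j HtO).
    apply Hst; lia. }
  rewrite (orbit_lex_le_head s j), (orbit_lex_le_head t j), Hsym, H0.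
  rewrite (Hst 0%nat (S j) ltac:(lia)). reflexivity.
Qed.

Section OrbitPatterns.

Variable X : seqb -> R.
Hypothesis X_lex : forall s j n,
  X (shiftn j s) <= X (shiftn n s) <-> lex_le (shiftn j s) (shiftn n s).
Variable d : nat.

Lemma same_ranks_orbit s t :
  same_ranks d (fun i => X (shiftn (d - i) s)) (fun i => X (shiftn (d - i) t)) <->
  same_orbit_order d s t.
Proof.
  split; intros H.
  - intros i j Hij. rewrite <- !X_lex.
    specialize (H (d - i)%nat (d - j)%nat ltac:(lia)); cbv beta in H.
    now replace (d - (d - i))%nat with i in H by lia;
        replace (d - (d - j))%nat with j in H by lia.
  - intros a b Hab. cbv beta. rewrite !X_lex. apply H; lia.
Qed.

Lemma P_pat_same_orbit_order r s t :
  is_perm d r -> P_pat X d r s -> P_pat X d r t -> same_orbit_order d s t.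
Proof. intros. apply same_ranks_orbit. now apply (has_pattern_same_ranks d _ _ r). Qed.

Lemma P_pat_of_same_orbit_order r s t :
  is_perm d r -> P_pat X d r s -> same_orbit_order d s t -> P_pat X d r t.
Proof. intros Hr Hs Hst. apply (same_ranks_has_pattern d _ _ r Hr Hs), same_ranks_orbit, Hst. Qed.

Lemma P_pat_of_shift r r' s0 s :
  is_perm d r -> is_perm d r' -> s0 0%nat = s 0%nat ->
  ~ Oset (shift s0) -> ~ Oset (shift s) ->
  P_pat X d r s0 -> P_pat X d r' (shift s0) -> P_pat X d r' (shift s) ->
  P_pat X d r s.
Proof.
  intros Hr Hr' H0 Hs0O HsO Hs0 Hss0 Hss.
  apply (P_pat_of_same_orbit_order r s0); auto.
  apply same_orbit_order_cons; auto.
  now apply (P_pat_same_orbit_order r').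
Qed.

End OrbitPatterns.

(* The whole space is invariant, so ergodicity makes it or its empty
   complement null; no estimate of cylinder measures is needed. *)
Lemma null_empty Q p (B : set) : ergodic Q p -> (forall s, ~ B s) -> null Q p B.
Proof.
  intros Herg HB.
  assert (Hmeas : measurable (fun _ => True)).
  { apply (meas_ext (cyl [])); [apply meas_cyl|].
    intros s; split; auto. intros _ i Hi. simpl in Hi; lia. }
  destruct (Herg _ Hmeas (fun s => conj (fun x => x) (fun x => x))) as [N|N];
    intros eps Heps; destruct (N eps Heps) as [c [Hcov Hsum]];
    exists c; split; auto; intros s Hs; exfalso; eapply HB; eauto.
Qed.

Theorem lemma8 (Q : bool -> bool -> R) (p : bool -> R) (X : seqb -> R) (d : nat)
  (a0 : bool) (Pi Pj : set) :
  markov_params Q p -> ergodic Q p ->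
  rv_measurable X -> lexicographic_like Q p X ->
  (1 <= d)%nat ->
  in_tilde_partition X d Pi -> in_tilde_partition X d Pj ->
  (forall s, Pi s -> cyl [a0] s) ->
  (forall s, (Pi s /\ Pj (shift s)) <-> (cyl [a0] s /\ Pj (shift s))) \/
  null Q p (fun s => Pi s /\ Pj (shift s)).
Proof.
  intros _ Herg _ [_ X_lex] _ HPi HPj HPi_cyl.
  destruct HPi as [HPiO|[r [Hr HPi]]].
  { exfalso. apply (Oset_not_in_cyl1 a0). intros s Hs. now apply HPi_cyl, HPiO. }
  destruct HPj as [HPjO|[r' [Hr' HPj]]].
  { right. apply null_empty; auto. intros s [Hs Hss].
    apply HPi in Hs. apply HPjO in Hss. rewrite Oset_shift in Hss. tauto. }
  destruct (classic (exists s0, Pi s0 /\ Pj (shift s0))) as [[s0 [Hs0 Hss0]]|Hempty].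
  - left. intros s; split; [intros [Hs Hss]; auto|]. intros [Hs Hss]; split; auto.
    pose proof (HPi_cyl s0 Hs0) as Hs0_cyl. rewrite cyl1_head in Hs, Hs0_cyl.
    apply HPi in Hs0. apply HPj in Hss0. apply HPj in Hss as [Hss HssO].
    apply HPi. split.
    + apply (P_pat_of_shift X X_lex d r r' s0 s); try tauto; congruence.
    + now rewrite <- Oset_shift.
  - right. apply null_empty; auto. intros s Hs. apply Hempty. eauto.
Qed.
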